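(* Let $\mathcal{V}$ be the vector space of all complex sequences $\vec{a}=(a_n)_{n\ge 0}$, and let $C:\mathcal{V}\to\mathcal{V}$ be the Cesàro matrix acting by matrix multiplication, $(C\vec a)_N=\frac{1}{N+1}\sum_{j=0}^{N}a_j$ for $N\ge 0$. For each $m\in\mathbb{N}_0=\{0,1,2,\dots\}$ let $\vec b_m\in\mathcal{V}$ be the sequence whose $n$-th entry is $0$ for $0\le n<m$ and $\binom{n}{m}$ for $n\ge m$ (i.e. $\vec b_m=(0,\dots,0,\binom{m}{m},\binom{m+1}{m},\binom{m+2}{m},\dots)$ with $m$ leading zeros). Then for each $m\in\mathbb{N}_0$, $$C\vec b_m=\frac{1}{m+1}\vec b_m.$$ Moreover, each of these eigenspaces (the eigenspace of $C$ on $\mathcal{V}$ for the eigenvalue $\frac{1}{m+1}$) is one dimensional.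
   Context: The Cesàro matrix is the infinite lower-triangular matrix $C=[c_{ij}]_{i,j\ge 0}$ with $c_{ij}=\frac{1}{i+1}$ for $j\le i$ and $c_{ij}=0$ for $j>i$; since it is lower triangular, $C\vec a$ is defined for every complex sequence $\vec a$. *)

From HB Require Import structures.
From mathcomp Require Import all_boot all_order all_algebra.
From mathcomp Require Import complex.
From mathcomp Require Import reals.
Set Implicit Arguments. Unset Strict Implicit. Unset Printing Implicit Defensive.
Import Order.TTheory GRing.Theory Num.Theory.
Local Open Scope ring_scope.

Definition cesaro {C : fieldType} (a : nat -> C) : nat -> C :=
  fun N => (N.+1%:R)^-1 * \sum_(j < N.+1) a j.

Definition bvec {C : fieldType} (m : nat) : nat -> C :=
  fun n => if (n < m)%N then 0 else ('C(n, m))%:R.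

Definition sscale {C : fieldType} (c : C) (a : nat -> C) : nat -> C :=
  fun n => c * a n.

Definition cesaro_eigenspace {C : fieldType} (lam : C) : (nat -> C) -> Prop :=
  fun a => cesaro a = sscale lam a.

Definition one_dimensional {C : fieldType} (S : (nat -> C) -> Prop) : Prop :=
  exists v : nat -> C, v <> (fun _ => 0) /\
    forall a, S a <-> exists c : C, a = sscale c v.

From HB Require Import structures.
From mathcomp Require Import all_boot all_order all_algebra.
From mathcomp Require Import complex.
From mathcomp Require Import reals.
From Stdlib Require Import FunctionalExtensionality.
Set Implicit Arguments. Unset Strict Implicit. Unset Printing Implicit Defensive.
Import GRing.Theory Num.Theory.
Local Open Scope ring_scope.

(* The hockey-stick identity gives C b_m = b_m / (m+1).  Conversely, an
   eigenvector a for 1/(m+1) satisfies m a_0 = 0 and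
   (n+1-m) a_(n+1) = (n+1) a_n, obtained by differencing consecutive partial
   sums; in characteristic 0 this determines a from its entry a_m, so every
   eigenvector is a_m b_m. *)

Lemma sum_bin_upper m N : (\sum_(j < N.+1) 'C(j, m) = 'C(N.+1, m.+1))%N.
Proof.
elim: N => [|N IH]; first by rewrite big_ord1; case: m => [|[|m]].
by rewrite big_ord_recr /= IH [in RHS]binS addnC.
Qed.

Section CesaroEigenvectors.

Variable F : fieldType.
Hypothesis charF0 : [pchar F] =i pred0.

Lemma natf_eq0 n : (n%:R == 0 :> F) = (n == 0%N).
Proof. exact: (pcharf0P F).1 charF0 n. Qed.

Lemma natf_S_neq0 n : (n.+1%:R : F) != 0.
Proof. by rewrite natf_eq0. Qed.

Lemma natf_subr_eq0 m n : (m%:R - n%:R == 0 :> F) = (m == n).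
Proof.
have [le_nm|lt_mn] := leqP n m.
  by rewrite -natrB // natf_eq0 subn_eq0 eqn_leq le_nm andbT.
rewrite -opprB -natrB; last exact: ltnW.
by rewrite oppr_eq0 natf_eq0 subn_eq0 leqNgt lt_mn ltn_eqF.
Qed.

Lemma bvecE m n : (bvec m n : F) = 'C(n, m)%:R.
Proof. by rewrite /bvec; case: ltnP => // /bin_small->. Qed.

Lemma cesaro_bvec m : cesaro (bvec m : nat -> F) = sscale (m.+1%:R)^-1 (bvec m).
Proof.
apply: functional_extensionality => N; rewrite /cesaro /sscale.
under eq_bigr => j _ do rewrite bvecE.
rewrite -natr_sum sum_bin_upper bvecE.
have diag : N.+1%:R * 'C(N, m)%:R = m.+1%:R * 'C(N.+1, m.+1)%:R :> F.
  by rewrite -!natrM (mul_bin_diag N.+1 m).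
apply: (mulfI (natf_S_neq0 N)); rewrite mulVKf ?natf_S_neq0 //.
by rewrite mulrCA diag mulKf ?natf_S_neq0.
Qed.

Lemma cesaro_sscale c (a : nat -> F) : cesaro (sscale c a) = sscale c (cesaro a).
Proof.
apply: functional_extensionality => N; rewrite /cesaro /sscale.
by rewrite -mulr_sumr mulrCA.
Qed.

Section Eigenvector.

Variables (m : nat) (a : nat -> F).
Hypothesis eig_a : cesaro_eigenspace (m.+1%:R)^-1 a.

Lemma cesaro_eigen_partial_sum N :
  m.+1%:R * \sum_(j < N.+1) a j = N.+1%:R * a N.
Proof.
have := congr1 (fun f => f N) eig_a; rewrite /cesaro /sscale => avg.
rewrite -[\sum_(j < N.+1) a j](mulVKf (natf_S_neq0 N)) avg.
by rewrite mulrCA mulVKf ?natf_S_neq0.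
Qed.

Lemma cesaro_eigen0 : m%:R * a 0 = 0.
Proof.
have := cesaro_eigen_partial_sum 0; rewrite big_ord1 mul1r -natr1 mulrDl mul1r.
by move/(canRL (addrK _)); rewrite subrr.
Qed.

Lemma cesaro_eigenS n : (n.+1%:R - m%:R) * a n.+1 = n.+1%:R * a n.
Proof.
have := cesaro_eigen_partial_sum n.+1.
rewrite big_ord_recr /= mulrDr cesaro_eigen_partial_sum => sumS.
rewrite -(addrK (m.+1%:R * a n.+1) (n.+1%:R * a n)) sumS -mulrBl; congr (_ * _).
by rewrite -(natr1 n.+1) -(natr1 m) opprD addrACA subrr addr0.
Qed.

End Eigenvector.

Lemma cesaro_eigen_eq m (a b : nat -> F) :
  cesaro_eigenspace (m.+1%:R)^-1 a -> cesaro_eigenspace (m.+1%:R)^-1 b ->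
  a m = b m -> a = b.
Proof.
move=> eig_a eig_b abm; apply: functional_extensionality.
elim=> [|n IH].
  case: m eig_a eig_b abm => [//|k] eig_a eig_b _.
  have zero0 (c : nat -> F) : cesaro_eigenspace (k.+2%:R)^-1 c -> c 0%N = 0.
    move=> eig_c; have /eqP := cesaro_eigen0 eig_c.
    by rewrite mulf_eq0 natf_eq0 => /eqP.
  by rewrite (zero0 a) // (zero0 b).
have [->//|ne] := eqVneq n.+1 m.
have nz : (n.+1%:R - m%:R : F) != 0 by rewrite natf_subr_eq0.
by apply: (mulfI nz); rewrite !cesaro_eigenS // IH.
Qed.

Lemma cesaro_eigenspaceE m (a : nat -> F) :
  cesaro_eigenspace (m.+1%:R)^-1 a <-> exists c, a = sscale c (bvec m).
Proof.
have eig_bvec (c : F) : cesaro_eigenspace (m.+1%:R)^-1 (sscale c (bvec m)).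
  rewrite /cesaro_eigenspace cesaro_sscale cesaro_bvec.
  by apply: functional_extensionality => n; rewrite /sscale mulrCA.
split=> [eig_a|[c ->]] //; exists (a m).
apply: cesaro_eigen_eq eig_a (eig_bvec (a m)) _.
by rewrite /sscale bvecE binn mulr1.
Qed.

Lemma bvec_neq0 m : bvec m <> (fun _ => 0 : F).
Proof. by move/(congr1 (fun f => f m)); rewrite bvecE binn; apply/eqP/oner_neq0. Qed.

Lemma one_dimensional_cesaro_eigenspace m :
  one_dimensional (cesaro_eigenspace ((m.+1%:R)^-1 : F)).
Proof. by exists (bvec m); split; [exact: bvec_neq0 | exact: cesaro_eigenspaceE]. Qed.

End CesaroEigenvectors.

Theorem mainTheorem1 (R : realType) :
  (forall m : nat,
     cesaro (bvec m : nat -> R[i]) = sscale (m.+1%:R)^-1 (bvec m)) /\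
  (forall m : nat,
     one_dimensional (cesaro_eigenspace ((m.+1%:R)^-1 : R[i]))).
Proof.
have charC0 := pchar_num R[i].
by split=> m; [exact: cesaro_bvec | exact: one_dimensional_cesaro_eigenspace].
Qed.
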